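(* Let $F:\mathbb{R}^{n_e}\times\mathbb{R}^{n_x}\to\mathbb{R}^{n_e}$ and $G:\mathbb{R}^{n_e}\times\mathbb{R}^{n_x}\to\mathbb{R}^{n_x}$ be $C^2$, and consider the system $$\dot e = F(e,x),\qquad \dot x = G(e,x),$$ whose solution through $(e_0,x_0)$ at $t=0$ is denoted $(E(e_0,x_0,t),X(e_0,x_0,t))$. Assume property TULES-NL holds: the system is forward complete and there exist real numbers $r>0$, $k>0$, $\lambda>0$ such that $$|E(e_0,x_0,t)|\le k|e_0|\exp(-\lambda t)\quad\text{for all }(e_0,x_0,t)\in B_e(r)\times\mathbb{R}^{n_x}\times\mathbb{R}_{\ge 0}.$$ Assume moreover that there exist positive real numbers $\rho,\mu,c$ such that the following bounds hold. - For all $x\in\mathbb{R}^{n_x}$: $\left|\frac{\partial F}{\partial e}(0,x)\right|\le\mu$ and $\left|\frac{\partial G}{\partial x}(0,x)\right|\le\rho$. - For all $(e,x)\in B_e(kr)\times\mathbb{R}^{n_x}$: $\left|\frac{\partial^2 F}{\partial e\partial e}(e,x)\right|\le c$, $\left|\frac{\partial^2 F}{\partial x\partial e}(e,x)\right|\le c$ and $\left|\frac{\partial G}{\partial e}(e,x)\right|\le c$. Then property UES-TL holds. That is: - the system $\dot{\tilde x}=\tilde G(\tilde x):=G(0,\tilde x)$ is forward complete; - there exist real numbers $\tilde k>0$ and $\tilde\lambda>0$ such that every solution $(\tilde E(\tilde e_0,\tilde x_0,t),\tilde X(\tilde x_0,t))$ of the transversally linear system $$\dot{\tilde e}=\frac{\partial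 F}{\partial e}(0,\tilde x)\,\tilde e,\qquad \dot{\tilde x}=G(0,\tilde x)$$ satisfies $|\tilde E(\tilde e_0,\tilde x_0,t)|\le\tilde k\exp(-\tilde\lambda t)|\tilde e_0|$ for all $(\tilde e_0,\tilde x_0,t)\in\mathbb{R}^{n_e}\times\mathbb{R}^{n_x}\times\mathbb{R}_{\ge0}$.
   Context: $B_e(a)$ denotes the open ball of radius $a$ centered at the origin of $\mathbb{R}^{n_e}$. The notation $|\cdot|$ denotes the Euclidean norm for vectors and the corresponding operator norm for matrices and higher derivatives. *)

From HB Require Import structures.
From mathcomp Require Import all_boot all_order all_algebra.
From mathcomp Require Import all_classical all_reals all_analysis.
Set Implicit Arguments. Unset Strict Implicit. Unset Printing Implicit Defensive.
Import Order.TTheory GRing.Theory Num.Theory.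
Import numFieldNormedType.Exports.
Local Open Scope classical_set_scope.
Local Open Scope ring_scope.

Definition enorm {R : realType} {n : nat} (v : 'rV[R]_n) : R :=
  Num.sqrt (\sum_(i < n) (v ord0 i) ^+ 2).

(* C^2 on a normed space: f is differentiable, every directional derivative
   p |-> Df(p)v is differentiable, and every second directional derivative
   p |-> D(Df(.)v)(p)u is continuous (in finite dimension this is C^2). *)
Definition C2 {R : realType} {V W : normedModType R} (f : V -> W) : Prop :=
  [/\ forall p, differentiable f p,
      forall (v : V) p, differentiable (fun q => derive f q v) p
    & forall (u v : V), continuous (fun p => derive (fun q => derive f q v) p u)].

Definition is_sol {R : realType} {V : normedModType R} (f : V -> V)
    (phi : R -> V) : Prop :=
  phi x @[x --> 0^'+] --> phi 0 /\
  forall t : R, 0 < t -> is_derive t 1 phi (f (phi t)).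

Definition forward_complete {R : realType} {V : normedModType R}
    (f : V -> V) : Prop :=
  forall p0 : V, exists phi : R -> V, phi 0 = p0 /\ is_sol f phi.

Section Sys.
Context {R : realType} {ne nx : nat}.
Notation E := 'rV[R]_ne.
Notation X := 'rV[R]_nx.

Definition sysF (F : E * X -> E) (G : E * X -> X) (p : E * X) : E * X :=
  (F p, G p).

Definition dFde (F : E * X -> E) (e : E) (x : X) (v : E) : E :=
  derive (fun e' : E => F (e', x)) e v.
Definition dGdx (G : E * X -> X) (e : E) (x : X) (w : X) : X :=
  derive (fun x' : X => G (e, x')) x w.
Definition dGde (G : E * X -> X) (e : E) (x : X) (v : E) : X :=
  derive (fun e' : E => G (e', x)) e v.
Definition d2Fdede (F : E * X -> E) (e : E) (x : X) (u v : E) : E :=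
  derive (fun e' : E => dFde F e' x v) e u.
Definition d2Fdxde (F : E * X -> E) (e : E) (x : X) (w : X) (v : E) : E :=
  derive (fun x' : X => dFde F e x' v) x w.

Definition redG (G : E * X -> X) (x : X) : X := G (0, x).
Definition tlF (F : E * X -> E) (G : E * X -> X) (p : E * X) : E * X :=
  (dFde F 0 p.2 p.1, G (0, p.2)).
End Sys.

(* Compare the transversally linear solution (e~, x~) through (e0, x0) with the
   nonlinear solution (E, X) through (s e0, x0), for a small s > 0.  TULES gives
   F(0, x) = 0 and |E(t)| <= k s |e0| exp(-lam t).  Gronwall's lemma, fed with the
   bounds on the derivatives, then gives |X(t) - x~(t)| = O(s) and, using the
   second-order Taylor expansion of F in e, |E(t) / s - e~(t)| = O(s) on [0, T].
   Hence |e~(T)| <= k |e0| exp(-lam T) + O(s), and s -> 0 yields UES-TL with the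
   same constants k and lam.  The reduced system is forward complete because the
   solutions starting on e = 0 stay there. *)

From HB Require Import structures.
From mathcomp Require Import all_boot all_order all_algebra.
From mathcomp Require Import all_classical all_reals all_analysis.
From mathcomp Require Import ring lra.
Import Order.TTheory GRing.Theory Num.Theory.
Import numFieldNormedType.Exports.
Set Implicit Arguments. Unset Strict Implicit. Unset Printing Implicit Defensive.
Local Open Scope classical_set_scope.
Local Open Scope ring_scope.

Section Enorm.
Context {R : realType}.

Lemma sum_sqr_le_sqr_sum (I : Type) (r : seq I) (f : I -> R) :
  (forall i, 0 <= f i) -> \sum_(i <- r) f i ^+ 2 <= (\sum_(i <- r) f i) ^+ 2.
Proof.
move=> f0; elim: r => [|a r IH]; first by rewrite !big_nil expr0n.
rewrite !big_cons sqrrD; have S0 : 0 <= \sum_(i <- r) f i by apply: sumr_ge0.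
have := f0 a; nra.
Qed.

Lemma cauchy_schwarz n (a b : 'I_n -> R) :
  (\sum_i a i * b i) ^+ 2 <= (\sum_i a i ^+ 2) * (\sum_i b i ^+ 2).
Proof.
have sum_sq_ge0 : 0 <= \sum_i \sum_j (a i * b j - a j * b i) ^+ 2.
  by apply: sumr_ge0 => i _; apply: sumr_ge0 => j _; apply: sqr_ge0.
have -> : (\sum_i a i * b i) ^+ 2 = \sum_i \sum_j (a i * b i * (a j * b j)).
  by rewrite expr2 mulr_suml; apply: eq_bigr => i _; rewrite mulr_sumr.
have -> : (\sum_i a i ^+ 2) * (\sum_i b i ^+ 2) = \sum_i \sum_j (a i ^+ 2 * b j ^+ 2).
  by rewrite mulr_suml; apply: eq_bigr => i _; rewrite mulr_sumr.
have swap : \sum_i \sum_j (a j ^+ 2 * b i ^+ 2) = \sum_i \sum_j (a i ^+ 2 * b j ^+ 2).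
  by rewrite exchange_big.
have expand : \sum_i \sum_j (a i * b j - a j * b i) ^+ 2 =
   \sum_i \sum_j (a i ^+ 2 * b j ^+ 2) + \sum_i \sum_j (a j ^+ 2 * b i ^+ 2)
   - 2 * \sum_i \sum_j (a i * b i * (a j * b j)).
  rewrite mulr_sumr -big_split /= -sumrB; apply: eq_bigr => i _.
  rewrite mulr_sumr -big_split /= -sumrB; apply: eq_bigr => j _.
  ring.
by rewrite expand swap in sum_sq_ge0; lra.
Qed.

Lemma enorm_ge0 n (v : 'rV[R]_n) : 0 <= enorm v.
Proof. exact: sqrtr_ge0. Qed.

Lemma enorm_sqr n (v : 'rV[R]_n) : enorm v ^+ 2 = \sum_i v ord0 i ^+ 2.
Proof. by rewrite sqr_sqrtr //; apply: sumr_ge0 => i _; apply: sqr_ge0. Qed.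

Lemma enorm0 n : enorm (0 : 'rV[R]_n) = 0.
Proof. by rewrite /enorm big1 ?sqrtr0 // => i _; rewrite mxE expr0n. Qed.

Lemma enorm_coord n (v : 'rV[R]_n) i : `|v ord0 i| <= enorm v.
Proof.
rewrite /enorm -sqrtr_sqr ler_sqrt; last by apply: sumr_ge0 => j _; apply: sqr_ge0.
by rewrite (bigD1 i) //= lerDl; apply: sumr_ge0 => j _; apply: sqr_ge0.
Qed.

Lemma enorm_eq0 n (v : 'rV[R]_n) : enorm v <= 0 -> v = 0.
Proof.
move=> v0; apply/rowP => i; rewrite mxE; apply/eqP; rewrite -normr_eq0.
by rewrite eq_le normr_ge0 andbT (le_trans (enorm_coord v i) v0).
Qed.

Lemma enormZ n (a : R) (v : 'rV[R]_n) : enorm (a *: v) = `|a| * enorm v.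
Proof.
rewrite /enorm -sqrtr_sqr -sqrtrM ?sqr_ge0 //; congr Num.sqrt.
by rewrite mulr_sumr; apply: eq_bigr => i _; rewrite mxE exprMn.
Qed.

Lemma enormZ_le n (v : 'rV[R]_n) (tau : R) : 0 <= tau <= 1 -> enorm (tau *: v) <= enorm v.
Proof.
by case/andP=> t0 t1; rewrite enormZ ger0_norm // ler_piMl // enorm_ge0.
Qed.

Lemma enormN n (v : 'rV[R]_n) : enorm (- v) = enorm v.
Proof. by rewrite -scaleN1r enormZ normrN normr1 mul1r. Qed.

Lemma enormB n (u v : 'rV[R]_n) : enorm (u - v) = enorm (v - u).
Proof. by rewrite -enormN opprB. Qed.

Lemma enormD n (u v : 'rV[R]_n) : enorm (u + v) <= enorm u + enorm v.
Proof.
have u0 := enorm_ge0 u; have v0 := enorm_ge0 v.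
rewrite -(ger0_norm (addr_ge0 u0 v0)) /enorm -sqrtr_sqr ler_sqrt ?sqr_ge0 //.
have uv_le : \sum_i u ord0 i * v ord0 i <= enorm u * enorm v.
  rewrite -(ger0_norm (mulr_ge0 u0 v0)); apply: (le_trans (ler_norm _)).
  rewrite -ler_sqr ?nnegrE ?normr_ge0 // !real_normK ?num_real // exprMn.
  by rewrite !enorm_sqr; apply: cauchy_schwarz.
have -> : \sum_(i < n) (u + v) ord0 i ^+ 2 =
  \sum_i u ord0 i ^+ 2 + \sum_i v ord0 i ^+ 2 + 2 * \sum_i u ord0 i * v ord0 i.
  by rewrite mulr_sumr -!big_split /=; apply: eq_bigr => i _; rewrite mxE; ring.
fold (enorm u) (enorm v); rewrite -!enorm_sqr; nra.
Qed.

Lemma enorm_le_sum n (v : 'rV[R]_n) : enorm v <= \sum_i `|v ord0 i|.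
Proof.
have S0 : 0 <= \sum_i `|v ord0 i| by apply: sumr_ge0.
rewrite /enorm -(ger0_norm S0) -sqrtr_sqr ler_sqrt; last exact: sqr_ge0.
under eq_bigr => i _ do rewrite -real_normK ?num_real //.
exact: sum_sqr_le_sqr_sum.
Qed.

(* MathComp's norm [`|v|] on ['rV_n] is the sup norm; it defines the topology. *)
Lemma enorm_le_mxnorm n (v : 'rV[R]_n) : enorm v <= n%:R * `|v|.
Proof.
apply: le_trans (enorm_le_sum v) _.
have -> : n%:R * `|v| = \sum_(i < n) `|v| by rewrite sumr_const card_ord mulr_natl.
apply: ler_sum => i _.
by rewrite [`|v|]mx_normrE; apply/bigmax_geP; right; exists (ord0, i).
Qed.

Lemma enorm_lipschitz n (u v : 'rV[R]_n) :
  `|enorm u - enorm v| <= n%:R * `|u - v|.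
Proof.
have uv := enormD v (u - v); have vu := enormD u (v - u).
rewrite addrC subrK in uv; rewrite addrC subrK enormB in vu.
have := enorm_le_mxnorm (u - v).
by rewrite ler_norml => uv_le; apply/andP; split; lra.
Qed.

Lemma enorm_continuous n : continuous (@enorm R n).
Proof.
move=> v; apply/(@cvgrPdist_lt _ _ _ (nbhs v) (nbhs_filter v)) => e e0.
have e1 : 0 < e / (n%:R + 1) by rewrite divr_gt0 // ltr_wpDl.
near=> w; apply: le_lt_trans (enorm_lipschitz v w) _.
have vw : `|v - w| < e / (n%:R + 1) by near: w; exact: cvgr_dist_lt.
rewrite ltr_pdivlMr ?ltr_wpDl // in vw.
have := normr_ge0 (v - w); have : 0 <= (n%:R : R) by []; nra.
Unshelve. all: end_near.
Qed.

End Enorm.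

Section Calculus.
Context {R : realType}.

Lemma is_derive_linear (V W : normedModType R) (L : V -> W) (f : R -> V) (t : R) (l : V) :
  (forall (a : R) x y, L (a *: (x - y)) = a *: (L x - L y)) -> continuous L ->
  is_derive t 1 f l -> is_derive t 1 (L \o f) (L l).
Proof.
move=> L_lin L_cont df.
have cvf : (fun h : R => h^-1 *: ((f \o shift t) (h *: 1) - f t)) @ 0^' --> l.
  by rewrite -(@derive_val _ _ _ _ _ _ _ df); exact: (@ex_derive _ _ _ _ _ _ _ df).
have cvLf : (fun h : R => h^-1 *: (((L \o f) \o shift t) (h *: 1) - (L \o f) t))
    @ 0^' --> L l.
  rewrite (_ : (fun h : R => _) = L \o (fun h : R => h^-1 *: ((f \o shift t) (h *: 1) - f t))).
    exact: continuous_cvg (L_cont l) cvf.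
  by apply/funext => h /=; rewrite L_lin.
split; last exact: cvg_lim.
by apply/cvg_ex; exists (L l).
Qed.

Lemma is_derive_fst (U V : normedModType R) (f : R -> U * V) (t : R) (l : U * V) :
  is_derive t 1 f l -> is_derive t 1 (fst \o f) l.1.
Proof. by apply: is_derive_linear => // p; apply: cvg_fst. Qed.

Lemma is_derive_snd (U V : normedModType R) (f : R -> U * V) (t : R) (l : U * V) :
  is_derive t 1 f l -> is_derive t 1 (snd \o f) l.2.
Proof. by apply: is_derive_linear => // p; apply: cvg_snd. Qed.

Lemma is_derive_coord n (f : R -> 'rV[R]_n) (t : R) (l : 'rV[R]_n) i :
  is_derive t 1 f l -> is_derive t 1 (fun s => f s ord0 i) (l ord0 i).
Proof.
apply: (is_derive_linear (L := fun v : 'rV[R]_n => v ord0 i)).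
  by move=> a x y; rewrite !mxE.
by move=> v; apply: differentiable_continuous; apply: differentiable_coord.
Qed.

Lemma cvg_right0_fst (U V : normedModType R) (f : R -> U * V) :
  f x @[x --> 0^'+] --> f 0 -> (f x).1 @[x --> 0^'+] --> (f 0).1.
Proof.
move=> cvf; have fst_cont : {for f 0, continuous (@fst U V)} by apply: cvg_fst.
exact: (@continuous_cvg _ _ _ _ _ f fst (f 0) fst_cont cvf).
Qed.

Lemma cvg_right0_snd (U V : normedModType R) (f : R -> U * V) :
  f x @[x --> 0^'+] --> f 0 -> (f x).2 @[x --> 0^'+] --> (f 0).2.
Proof.
move=> cvf; have snd_cont : {for f 0, continuous (@snd U V)} by apply: cvg_snd.
exact: (@continuous_cvg _ _ _ _ _ f snd (f 0) snd_cont cvf).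
Qed.

Lemma is_derive_continuous (V : normedModType R) (f : R -> V) (t : R) (l : V) :
  is_derive t 1 f l -> {for t, continuous f}.
Proof.
move=> df; apply: differentiable_continuous; apply/derivable1_diffP.
exact: (@ex_derive _ _ _ _ _ _ _ df).
Qed.

Lemma is_derive_eq0 (V : normedModType R) (f : R -> V) (t : R) (l : V) :
  0 < t -> (forall s, 0 < s -> f s = 0) -> is_derive t 1 f l -> l = 0.
Proof.
move=> t0 f0 df.
have df0 : is_derive t 1 f 0.
  have f0_near : \near t, (cst 0 : R -> V) t = f t.
    by near=> s; rewrite f0 //; near: s; exact: lt_nbhsr.
  exact: near_eq_is_derive f0_near (is_derive_cst 0 t 1).
by rewrite -(@derive_val _ _ _ _ _ _ _ df) (@derive_val _ _ _ _ _ _ _ df0).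
Unshelve. all: end_near.
Qed.

Lemma cvg_right0_eq0 (V W : normedModType R) (f : R -> V) (g : V -> W) :
  f x @[x --> 0^'+] --> f 0 -> {for f 0, continuous g} ->
  (forall s, 0 < s -> g (f s) = 0) -> g (f 0) = 0.
Proof.
move=> cvf cg g0.
have cvg0 : (g \o f) @ 0^'+ --> (0 : W).
  apply: cvg_near_cst; rewrite near_withinE; apply/nbhs_ballP.
  by exists 1 => [|s _ /= s0]; [exact: ltr01 | apply: g0].
exact: cvg_unique _ (continuous_cvg _ cg cvf) cvg0.
Qed.

Lemma is_derive_line (V W : normedModType R) (f : V -> W) (p u : V) (tau : R) :
  differentiable f (tau *: u + p) ->
  is_derive tau 1 (fun s : R => f (s *: u + p)) (derive f (tau *: u + p) u).
Proof.
move=> df.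
have quotE : (fun h : R => h^-1 *: (((fun s : R => f (s *: u + p)) \o shift tau) (h *: 1)
            - f (tau *: u + p))) =
         (fun h : R => h^-1 *: ((f \o shift (tau *: u + p)) (h *: u) - f (tau *: u + p))).
  apply/funext => h /=; congr (_ *: (f _ - _)).
  rewrite /shift /= (_ : h%:A = h); last by rewrite /GRing.scale /= mulr1.
  by rewrite scalerDl addrA.
have dv := diff_derivable (v := u) df.
by split; rewrite /derivable /derive /= quotE.
Qed.

(* Componentwise mean value inequality; the factor [n] is the price of
   comparing [enorm] with the sum of the coordinates. *)
Lemma mvt_enorm (V : normedModType R) n (f : V -> 'rV[R]_n) (p u : V)
    (w : 'rV[R]_n) (M : R) :
  (forall tau, 0 <= tau <= 1 -> differentiable f (tau *: u + p)) ->
  (forall tau, 0 <= tau <= 1 -> enorm (derive f (tau *: u + p) u - w) <= M) ->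
  enorm (f (u + p) - f p - w) <= n%:R * M.
Proof.
move=> df bd; apply: le_trans (enorm_le_sum _) _.
have -> : n%:R * M = \sum_(i < n) M by rewrite sumr_const card_ord mulr_natl.
apply: ler_sum => i _.
pose g s := f (s *: u + p) ord0 i - s * w ord0 i.
pose dg s := derive f (s *: u + p) u ord0 i - w ord0 i.
have g_der (s : R) : 0 <= s <= 1 -> is_derive s 1 g (dg s).
  move=> s01; apply: is_deriveB; first exact: is_derive_coord (is_derive_line (df s s01)).
  have := @is_deriveZ R R R id (w ord0 i) s 1 1 (is_derive_id s 1).
  rewrite (_ : w ord0 i *: (1 : R) = w ord0 i); last exact: mulr1.
  by rewrite (_ : w ord0 i \*: id = (fun s : R => s * w ord0 i)) //; apply/funext => x /=; exact: mulrC.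
have g_cont : {within `[0, 1], continuous g}.
  apply: derivable_within_continuous => x; rewrite in_itv /= => x01.
  exact: (@ex_derive _ _ _ _ _ _ _ (g_der x x01)).
have [c c01 mvt] : exists2 c, c \in `[0, 1] & g 1 - g 0 = dg c * (1 - 0).
  apply: MVT_segment ler01 _ g_cont => x; rewrite in_itv /= => /andP[x0 x1].
  by apply: g_der; rewrite !ltW.
rewrite in_itv /= in c01.
have -> : (f (u + p) - f p - w) ord0 i = g 1 - g 0.
  by rewrite /g !mxE scale1r scale0r add0r mul1r mul0r subr0; ring.
rewrite mvt subr0 mulr1; apply: le_trans (bd c c01).
have <- : ('D_u f (c *: u + p) - w) ord0 i = dg c by rewrite !mxE.
exact: enorm_coord.
Qed.

Lemma dini_enorm n (f : R -> 'rV[R]_n) (t : R) (l : 'rV[R]_n) :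
  is_derive t 1 f l -> forall eps, 0 < eps ->
  exists2 eta, 0 < eta & forall h, 0 < h < eta ->
    enorm (f (t + h)) <= enorm (f t) + h * (enorm l + eps).
Proof.
move=> df eps eps0.
have cv : (fun h : R => h^-1 *: ((f \o shift t) (h *: 1) - f t)) @ 0^' --> l.
  by rewrite -(@derive_val _ _ _ _ _ _ _ df); exact: (@ex_derive _ _ _ _ _ _ _ df).
have e0 : 0 < eps / (n%:R + 1) by rewrite divr_gt0 // ltr_wpDl.
move/cvgr_dist_lt: cv => /(_ _ e0); rewrite near_withinE => /nbhs_ballP [d /= d0 H].
exists d => // h /andP[h0 hd].
have := H h _ (lt0r_neq0 h0); rewrite /ball /= sub0r normrN gtr0_norm // => /(_ hd).
rewrite (_ : h%:A = h); last by rewrite /GRing.scale /= mulr1.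
set q := h^-1 *: _ => Hq.
have -> : f (t + h) = f t + h *: q.
  by rewrite /q scalerA mulfV ?lt0r_neq0 // scale1r (addrC h t) [f t + _]addrC subrK.
have q_l : enorm (q - l) <= eps.
  rewrite enormB; apply: le_trans (enorm_le_mxnorm _) _.
  apply: le_trans (ler_wpM2l (ler0n _ n) (ltW Hq)) _.
  rewrite mulrA ler_pdivrMr ?ltr_wpDl //; nra.
have -> : q = l + (q - l) by rewrite addrC subrK.
apply: le_trans (enormD _ _) _; rewrite lerD2l enormZ gtr0_norm // ler_pM2l //.
by apply: le_trans (enormD _ _) _; rewrite lerD2l.
Qed.

End Calculus.

Section ContinuousInduction.
Context {R : realType}.

Lemma continuous_induction (P : R -> Prop) (T : R) :
  P 0 ->
  (forall s, 0 < s <= T -> (forall u, 0 <= u < s -> P u) -> P s) ->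
  (forall s, 0 <= s < T -> (forall u, 0 <= u <= s -> P u) ->
     exists2 eta, 0 < eta & forall u, s < u < s + eta -> P u) ->
  forall t, 0 <= t <= T -> P t.
Proof.
move=> P0 closed open t /andP[t0 tT].
pose S := [set s | 0 <= s <= T /\ forall u, 0 <= u <= s -> P u].
have S0 : S 0.
  split=> [|u u0]; first by rewrite lexx (le_trans t0 tT).
  by have -> : u = 0 by apply/eqP; rewrite eq_le andbC.
have S_ub : ubound S T by move=> s [/andP[]].
have supS : has_sup S by split; [exists 0 | exists T].
set ss := sup S.
have ss0 : 0 <= ss := sup_upper_bound supS S0.
have ssT : ss <= T by apply: ge_sup => //; exists 0.
have below u : 0 <= u < ss -> P u.
  move=> /andP[u0 uss]; have [|e [_ Pe] lt_e] := sup_adherent (eps := ss - u) _ supS; first by rewrite subr_gt0.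
  by apply: Pe; rewrite u0 /=; move: lt_e; rewrite -/ss; lra.
have Sss : S ss.
  split=> [|u /andP[u0]]; first by rewrite ss0.
  rewrite le_eqVlt => /orP[/eqP ->|]; last by move=> uss; apply: below; rewrite u0.
  have [ss_gt0|] := ltP 0 ss; first by apply: closed; rewrite ?ss_gt0.
  by move=> ss_le0; have -> : ss = 0 by apply/eqP; rewrite eq_le ss_le0.
suff ssE : ss = T by case: Sss => _; apply; rewrite t0 ssE.
apply/eqP; rewrite eq_le ssT leNgt; apply/negP => ss_ltT.
have [|eta eta0 above] := open ss _ Sss.2; first by rewrite ss0.
pose m := Num.min (eta / 2) (T - ss).
have m_pos : 0 < m by rewrite lt_min divr_gt0 //= subr_gt0.
have m_eta : m <= eta / 2 by rewrite ge_min lexx.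
have m_T : m <= T - ss by rewrite ge_min lexx orbT.
have : S (ss + m).
  split=> [|u /andP[u0 u_le]]; first by apply/andP; split; lra.
  have [u_ss|ss_u] := leP u ss; first by apply: Sss.2; rewrite u0.
  by apply: above; rewrite ss_u /=; lra.
by move/(sup_upper_bound supS); rewrite -/ss; lra.
Qed.

Lemma le_of_le_left (p : R -> R) (s B : R) : 0 < s -> {for s, continuous p} ->
  (forall u, 0 <= u < s -> p u <= B) -> p s <= B.
Proof.
move=> s_gt0 p_cont below; rewrite leNgt; apply/negP => B_lt_p.
have eps_pos : 0 < p s - B by rewrite subr_gt0.
move: p_cont => /cvgr_dist_lt /(_ _ eps_pos) /nbhs_ballP [d /= d0 near_s].
pose m := Num.min d s.
have m_pos : 0 < m by rewrite lt_min d0.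
have m_d : m <= d by rewrite ge_min lexx.
have m_s : m <= s by rewrite ge_min lexx orbT.
have := near_s (s - m / 2); rewrite /ball /= opprB addrC subrK gtr0_norm ?divr_gt0 //.
move=> /(_ ltac:(lra)); have := below (s - m / 2) ltac:(apply/andP; split; lra).
have := ler_norm (p s - p (s - m / 2)); lra.
Qed.

End ContinuousInduction.

Section GronwallBound.
Context {R : realType}.
Variables (a b del : R).
Hypotheses (a_ge0 : 0 <= a) (b_gt0 : 0 < b) (del_gt0 : 0 < del).

(* The solution of [w' = a + del + b w] with [w 0 = del]. *)
Definition gronwall_bound (t : R) : R :=
  ((a + del) / b + del) * expR (b * t) - (a + del) / b.

Lemma gronwall_bound0 : gronwall_bound 0 = del.
Proof. by rewrite /gronwall_bound mulr0 expR0 mulr1 addrC addKr. Qed.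

Lemma gronwall_bound_coef_gt0 : 0 < (a + del) / b + del.
Proof. by rewrite addr_gt0 // divr_gt0 // ltr_wpDl. Qed.

Lemma le_gronwall_bound s t : s <= t -> gronwall_bound s <= gronwall_bound t.
Proof.
move=> st; rewrite lerD2r ler_pM2l ?gronwall_bound_coef_gt0 //.
by rewrite ler_expR ler_pM2l.
Qed.

(* Since [w' = a + del + b w], this is the convexity of [w]. *)
Lemma gronwall_bound_tangent s h : 0 <= h ->
  gronwall_bound s + h * (a + b * gronwall_bound s + del) <= gronwall_bound (s + h).
Proof.
move=> h0; rewrite /gronwall_bound (mulrDr b s h) expRD.
have K0 := gronwall_bound_coef_gt0; set K := (a + del) / b + del in K0 *.
have e1 := expR_ge1Dx (b * h); have e2 := expR_gt0 (b * s).
have bC : b * ((a + del) / b) = a + del by rewrite mulrC divfK // gt_eqF.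
have : K * expR (b * s) * (1 + b * h) <= K * expR (b * s) * expR (b * h).
  by rewrite ler_pM2l ?mulr_gt0.
nra.
Qed.

Lemma gronwall (p : R -> R) (T : R) :
  p 0 <= 0 -> p x @[x --> 0^'+] --> p 0 ->
  (forall t, 0 < t <= T -> {for t, continuous p}) ->
  (forall t, 0 < t < T -> forall eps, 0 < eps -> exists2 eta, 0 < eta &
     forall h, 0 < h < eta -> p (t + h) <= p t + h * (a + b * p t + eps)) ->
  forall t, 0 <= t <= T -> p t <= gronwall_bound t.
Proof.
move=> p0 p_right0 p_cont p_dini.
apply: (continuous_induction (P := fun t => p t <= gronwall_bound t)).
- by rewrite /= gronwall_bound0 (le_trans p0 (ltW del_gt0)).
- move=> s /[dup] sT /andP[s_gt0 _] below; apply: le_of_le_left (p_cont s sT) _ => //.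
  move=> u /[dup] /below pu /andP[_ /ltW us].
  exact: le_trans pu (le_gronwall_bound us).
- move=> s /andP[s0 sT] below.
  have ps : p s <= gronwall_bound s by apply: below; rewrite s0 lexx.
  have [s_gt0|] := ltP 0 s; last first.
    move=> s_le0; have {s0 s_le0} -> : s = 0 by apply/eqP; rewrite eq_le s_le0.
    move/cvgr_dist_lt: p_right0 => /(_ _ del_gt0).
    rewrite near_withinE => /nbhs_ballP [d /= d0 near0].
    exists d => // u /andP[u_gt0]; rewrite add0r => ud.
    have := near0 u; rewrite /ball /= sub0r normrN gtr0_norm // => /(_ ud u_gt0).
    have := @le_gronwall_bound 0 u (ltW u_gt0); rewrite gronwall_bound0.
    rewrite distrC; have := ler_norm (p u - p 0); lra.
  have [|eta eta0 dini] := p_dini s _ del del_gt0; first by rewrite s_gt0.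
  exists eta => // u /andP[su ueta].
  have := dini (u - s); rewrite [s + _]addrC subrK => /(_ ltac:(apply/andP; split; lra)).
  have := @gronwall_bound_tangent s (u - s) ltac:(lra).
  rewrite [s + _]addrC subrK.
  have : 0 <= (u - s) * b * (gronwall_bound s - p s).
    by rewrite !mulr_ge0 ?subr_ge0 // ltW // subr_gt0.
  nra.
Qed.

End GronwallBound.

Section EnormGronwall.
Context {R : realType}.

Definition gronwall_const (A b T : R) : R := ((A + 1) / b + 1) * expR (b * T).

Lemma gronwall_const_ge0 (A b T : R) : 0 <= A -> 0 < b -> 0 <= gronwall_const A b T.
Proof.
move=> A0 b0; rewrite mulr_ge0 ?expR_ge0 // addr_ge0 //.
by rewrite divr_ge0 ?addr_ge0 // ltW.
Qed.

Lemma gronwall_bound_scale (A b s t T : R) : 0 <= A -> 0 < b -> 0 < s -> t <= T ->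
  gronwall_bound (s * A) b s t <= s * gronwall_const A b T.
Proof.
move=> A0 b0 s0 tT; rewrite /gronwall_bound /gronwall_const.
have -> : (s * A + s) / b + s = s * ((A + 1) / b + 1) by field; rewrite gt_eqF.
have C0 : 0 <= (s * A + s) / b by rewrite divr_ge0 ?addr_ge0 ?mulr_ge0 // ltW.
have K0 : 0 <= (A + 1) / b + 1 by rewrite addr_ge0 // divr_ge0 ?addr_ge0 // ltW.
have : expR (b * t) <= expR (b * T) by rewrite ler_expR ler_pM2l.
rewrite -mulrA; move/(ler_wpM2l K0)/(ler_wpM2l (ltW s0)); lra.
Qed.

Lemma enorm_gronwall n (f f' : R -> 'rV[R]_n) (A b s T : R) :
  0 <= A -> 0 < b -> 0 < s ->
  f x @[x --> 0^'+] --> f 0 -> f 0 = 0 ->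
  (forall t : R, 0 < t -> is_derive t 1 f (f' t)) ->
  (forall t, 0 < t < T -> enorm (f' t) <= s * A + b * enorm (f t)) ->
  forall t, 0 <= t <= T -> enorm (f t) <= s * gronwall_const A b T.
Proof.
move=> A0 b0 s0 f_right0 f0 f_der f'_bound t tT.
have sA0 : 0 <= s * A by rewrite mulr_ge0 // ltW.
apply: le_trans (gronwall_bound_scale (t := t) A0 b0 s0 _); last by case/andP: tT.
refine (gronwall sA0 b0 s0 (p := enorm \o f) (T := T) _ _ _ _ tT).
- by rewrite /= f0 enorm0.
- exact: (continuous_cvg _ (@enorm_continuous R n (f 0)) f_right0).
- move=> u /andP[u0 _]; apply: continuous_comp; last exact: enorm_continuous.
  exact: is_derive_continuous (f_der u u0).
- move=> u /andP[u0 uT] eps eps0.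
  have [eta eta0 dini] := dini_enorm (f_der u u0) eps0.
  exists eta => // h hh; apply: le_trans (dini h hh) _.
  rewrite lerD2l ler_wpM2l ?lerD2r ?f'_bound ?u0 //.
  by case/andP: hh => /ltW.
Qed.

End EnormGronwall.

Section SmallParameter.
Context {R : realType}.

Lemma le_of_le_add_small (A B D a r : R) : 0 <= D -> 0 <= a -> 0 < r ->
  (forall s, 0 < s -> s * a < r -> A <= B + s * D) -> A <= B.
Proof.
move=> D0 a0 r0 H; rewrite leNgt; apply/negP => BA.
pose s := Num.min (r / (a + 1)) ((A - B) / (D + 1)).
have s_r : s <= r / (a + 1) by rewrite ge_min lexx.
have s_AB : s <= (A - B) / (D + 1) by rewrite ge_min lexx orbT.
have s0 : 0 < s by rewrite lt_min !divr_gt0 ?subr_gt0 ?ltr_wpDl.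
rewrite !ler_pdivlMr ?ltr_wpDl // in s_r s_AB.
have := H s s0; nra.
Qed.

Lemma scaled_product_le (s C p q a b : R) : 0 < s -> 0 <= C ->
  0 <= p <= s * a -> 0 <= q <= s * b -> s^-1 * (C * (p * q)) <= s * (C * (a * b)).
Proof.
move=> s0 C0 /andP[p0 pa] /andP[q0 qb].
apply: le_trans (_ : s^-1 * (C * ((s * a) * (s * b))) <= _).
  apply: ler_wpM2l; first by rewrite invr_ge0 ltW.
  by apply: ler_wpM2l => //; apply: ler_pM.
by rewrite le_eqVlt; apply/orP; left; apply/eqP; field; rewrite gt_eqF.
Qed.

End SmallParameter.

Section SmoothSystem.
Context {R : realType} {ne nx : nat}.
Notation E := 'rV[R]_ne.
Notation X := 'rV[R]_nx.
Variables (F : E * X -> E) (G : E * X -> X).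
Hypotheses (CF : C2 F) (CG : C2 G).

Lemma derive_partial_e (W : normedModType R) (f : E * X -> W) e x v :
  derive (fun e' : E => f (e', x)) e v = derive f (e, x) (v, 0).
Proof.
rewrite /derive (_ : (fun h : R => _) =
  (fun h : R => h^-1 *: ((f \o shift (e, x)) (h *: (v, (0 : X))) - f (e, x)))) //.
apply/funext => h /=; rewrite /shift /=; congr (_ *: (f _ - _)).
by apply: injective_projections => //=; rewrite scaler0 add0r.
Qed.

Lemma differentiable_F_e e x : differentiable (fun e' : E => F (e', x)) e.
Proof.
rewrite (_ : (fun e' : E => F (e', x)) = F \o (fun e' : E => (e', x))) //.
by case: CF => dF _ _; apply: differentiable_comp.
Qed.

Lemma differentiable_G_e e x : differentiable (fun e' : E => G (e', x)) e.
Proof.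
rewrite (_ : (fun e' : E => G (e', x)) = G \o (fun e' : E => (e', x))) //.
by case: CG => dG _ _; apply: differentiable_comp.
Qed.

Lemma differentiable_G_x e x : differentiable (fun x' : X => G (e, x')) x.
Proof.
rewrite (_ : (fun x' : X => G (e, x')) = G \o (fun x' : X => (e, x'))) //.
by case: CG => dG _ _; apply: differentiable_comp.
Qed.

Lemma differentiable_dFde_e e x v : differentiable (fun e' : E => dFde F e' x v) e.
Proof.
rewrite (_ : (fun e' => _) = (fun q => derive F q (v, 0)) \o (fun e' : E => (e', x))).
  by case: CF => _ dF2 _; apply: differentiable_comp.
by apply/funext => e' /=; rewrite /dFde derive_partial_e.
Qed.

Lemma differentiable_dFde_x e x v : differentiable (fun x' : X => dFde F e x' v) x.
Proof.
rewrite (_ : (fun x' => _) = (fun q => derive F q (v, 0)) \o (fun x' : X => (e, x'))).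
  by case: CF => _ dF2 _; apply: differentiable_comp.
by apply/funext => x' /=; rewrite /dFde derive_partial_e.
Qed.

Lemma dFdeE e x v : dFde F e x v = 'd (fun e' : E => F (e', x)) e v.
Proof. by rewrite /dFde deriveE //; apply: differentiable_F_e. Qed.

Lemma dFdeB e x u v : dFde F e x (u - v) = dFde F e x u - dFde F e x v.
Proof. by rewrite !dFdeE linearB. Qed.

Lemma dFdeZ e x (a : R) v : dFde F e x (a *: v) = a *: dFde F e x v.
Proof. by rewrite !dFdeE linearZ. Qed.

Lemma mvt_G_e (c : R) e x :
  (forall e' : E, enorm e' <= enorm e -> forall v, enorm (dGde G e' x v) <= c * enorm v) ->
  enorm (G (e, x) - G (0, x)) <= nx%:R * (c * enorm e).
Proof.
move=> bd; have := @mvt_enorm R E nx (fun e' => G (e', x)) 0 e 0 (c * enorm e).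
rewrite addr0 subr0; apply=> [tau _|tau t01]; first exact: differentiable_G_e.
by rewrite subr0 addr0; apply/bd/enormZ_le.
Qed.

Lemma mvt_G_x (rho : R) x x' :
  (forall y w : X, enorm (dGdx G 0 y w) <= rho * enorm w) ->
  enorm (G (0, x) - G (0, x')) <= nx%:R * (rho * enorm (x - x')).
Proof.
move=> bd; have := @mvt_enorm R X nx (fun y => G (0, y)) x' (x - x') 0 (rho * enorm (x - x')).
rewrite subrK subr0; apply=> [tau _|tau _]; first exact: differentiable_G_x.
by rewrite subr0; apply: bd.
Qed.

Lemma mvt_dFde_x (c : R) x x' v :
  (forall (y w : X) (v : E), enorm (d2Fdxde F 0 y w v) <= c * enorm w * enorm v) ->
  enorm (dFde F 0 x v - dFde F 0 x' v) <= ne%:R * (c * enorm (x - x') * enorm v).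
Proof.
move=> bd; have := @mvt_enorm R X ne (fun y => dFde F 0 y v) x' (x - x') 0
  (c * enorm (x - x') * enorm v).
rewrite subrK subr0; apply=> [tau _|tau _]; first exact: differentiable_dFde_x.
by rewrite subr0; apply: bd.
Qed.

(* The mean value inequality, applied to [F] and then to [dFde F]. *)
Lemma taylor_F_e (c : R) e x : 0 <= c ->
  (forall e' : E, enorm e' <= enorm e -> forall u v : E,
      enorm (d2Fdede F e' x u v) <= c * enorm u * enorm v) ->
  enorm (F (e, x) - F (0, x) - dFde F 0 x e) <= ne%:R * (ne%:R * (c * enorm e * enorm e)).
Proof.
move=> c0 bd.
have := @mvt_enorm R E ne (fun e' => F (e', x)) 0 e (dFde F 0 x e)
  (ne%:R * (c * enorm e * enorm e)).
rewrite addr0; apply=> [tau _|tau t01]; first exact: differentiable_F_e.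
have := @mvt_enorm R E ne (fun e' => dFde F e' x e) 0 (tau *: e) 0 (c * enorm e * enorm e).
rewrite !addr0 !subr0; apply=> [sig _|sig s01]; first exact: differentiable_dFde_e.
rewrite addr0 subr0; apply: le_trans (bd _ _ _ _) _.
  exact: le_trans (enormZ_le _ s01) (enormZ_le _ t01).
by rewrite ler_wpM2r ?enorm_ge0 // ler_wpM2l // enormZ_le.
Qed.

End SmoothSystem.

Section TransversalStability.
Context {R : realType} {ne nx : nat}.
Notation E := 'rV[R]_ne.
Notation X := 'rV[R]_nx.
Variables (F : E * X -> E) (G : E * X -> X).
Hypotheses (CF : C2 F) (CG : C2 G) (fc : forward_complete (sysF F G)).
Variables (r k lam : R).
Hypotheses (r_gt0 : 0 < r) (k_gt0 : 0 < k) (lam_gt0 : 0 < lam).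
Hypothesis tules : forall phi : R -> E * X, is_sol (sysF F G) phi ->
  enorm (phi 0).1 < r ->
  forall t : R, 0 <= t -> enorm (phi t).1 <= k * enorm (phi 0).1 * expR (- lam * t).

Lemma zero_section_solution x0 : exists phi : R -> E * X,
  [/\ phi 0 = (0, x0), is_sol (sysF F G) phi & forall t, 0 <= t -> (phi t).1 = 0].
Proof.
have [phi [phi0 phi_sol]] := fc (0, x0); exists phi; split => // t t0.
apply: enorm_eq0; have := tules phi_sol _ t0.
by rewrite phi0 /= enorm0 mulr0 mul0r; apply.
Qed.

(* By TULES the solutions starting on [e = 0] stay there, so [F] vanishes on it. *)
Lemma F_e0 x : F (0, x) = 0.
Proof.
have [phi [phi0 [phi_right0 phi_der] phi_e0]] := zero_section_solution x.
rewrite -phi0; apply: (cvg_right0_eq0 phi_right0).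
  by case: CF => dF _ _; apply: differentiable_continuous.
move=> s s0; apply: (is_derive_eq0 s0 _ (is_derive_fst (phi_der s s0))).
by move=> u u0; apply/phi_e0/ltW.
Qed.

Lemma reduced_forward_complete : forward_complete (redG G).
Proof.
move=> x0; have [phi [phi0 [phi_right0 phi_der] phi_e0]] := zero_section_solution x0.
exists (snd \o phi); split; first by rewrite /= phi0.
split; first exact: cvg_right0_snd.
move=> t t0; apply: is_derive_eq (is_derive_snd (phi_der t t0)) _.
by rewrite /redG /=; move: (phi_e0 t (ltW t0)); case: (phi t) => e x /= ->.
Qed.

Variables (rho mu c : R).
Hypotheses (rho_gt0 : 0 < rho) (mu_gt0 : 0 < mu) (c_gt0 : 0 < c).
Hypothesis dFde0_bound : forall (x : X) (v : E), enorm (dFde F 0 x v) <= mu * enorm v.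
Hypothesis dGdx0_bound : forall x w : X, enorm (dGdx G 0 x w) <= rho * enorm w.
Hypothesis second_bounds : forall (e : E) (x : X), enorm e < k * r ->
  [/\ forall u v : E, enorm (d2Fdede F e x u v) <= c * enorm u * enorm v,
      forall (w : X) (v : E), enorm (d2Fdxde F e x w v) <= c * enorm w * enorm v
    & forall v : E, enorm (dGde G e x v) <= c * enorm v].

Lemma G_deviation e x x' : enorm e < k * r ->
  enorm (G (e, x) - G (0, x')) <=
  nx%:R * (c * enorm e) + (nx%:R * rho + 1) * enorm (x - x').
Proof.
move=> e_small; rewrite -(subrK (G (0, x)) (G (e, x))) -addrA.
apply: le_trans (enormD _ _) _; apply: lerD.
  apply: (mvt_G_e CG) => e' e'_le.
  by case: (second_bounds x (le_lt_trans e'_le e_small)).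
apply: le_trans (mvt_G_x CG x x' dGdx0_bound) _.
by rewrite mulrA mulrDl mul1r lerDl enorm_ge0.
Qed.

(* Taylor remainder + variation of [DF(0,.)] in [x] + linear term,
   using [F(0,x) = 0]. *)
Lemma F_deviation (s : R) e x x' v : 0 < s -> enorm e < k * r ->
  enorm (s^-1 *: F (e, x) - dFde F 0 x' v) <=
  s^-1 * (ne%:R * (ne%:R * (c * enorm e * enorm e))) +
  s^-1 * (ne%:R * (c * enorm (x - x') * enorm e)) + mu * enorm (s^-1 *: e - v).
Proof.
move=> s0 e_small.
have -> : s^-1 *: F (e, x) - dFde F 0 x' v =
    s^-1 *: (F (e, x) - F (0, x) - dFde F 0 x e) +
    s^-1 *: (dFde F 0 x e - dFde F 0 x' e) + dFde F 0 x' (s^-1 *: e - v).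
  by rewrite F_e0 subr0 (dFdeB CF) (dFdeZ CF) !scalerBr !addrA !subrK.
have s_inv0 : 0 <= s^-1 by rewrite invr_ge0 ltW.
apply: le_trans (enormD _ _) _; apply: lerD => //.
apply: le_trans (enormD _ _) _; rewrite !enormZ (ger0_norm s_inv0).
apply: lerD; apply: ler_wpM2l => //.
  apply: (taylor_F_e CF (ltW c_gt0)) => e' e'_le.
  by case: (second_bounds x (le_lt_trans e'_le e_small)).
apply: (mvt_dFde_x CF) => y w u.
by case: (second_bounds y (_ : enorm 0 < k * r)); rewrite ?enorm0 ?mulr_gt0.
Qed.

Section Comparison.
Variable phi : R -> E * X.
Hypothesis phi_sol : is_sol (tlF F G) phi.
Variable T : R.
Hypothesis T_ge0 : 0 <= T.

Let e0 := enorm (phi 0).1.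
(* Gronwall constants of the [x]- and [e]-deviations; they do not depend on [s]. *)
Let bx := nx%:R * rho + 1.
Let Ax := nx%:R * c * k * e0.
Let Y := gronwall_const Ax bx T.
Let Ae := ne%:R * (ne%:R * (c * k * k * e0 * e0)) + ne%:R * c * Y * k * e0.
Let De := gronwall_const Ae mu T.

Let e0_ge0 : 0 <= e0. Proof. exact: enorm_ge0. Qed.
Let bx_gt0 : 0 < bx. Proof. by rewrite ltr_wpDl // mulr_ge0 // ltW. Qed.
Let Ax_ge0 : 0 <= Ax. Proof. by rewrite !mulr_ge0 // ltW. Qed.
Let Y_ge0 : 0 <= Y. Proof. exact: gronwall_const_ge0 Ax_ge0 bx_gt0. Qed.
Let Ae_ge0 : 0 <= Ae.
Proof.
have c0 := ltW c_gt0; have k0 := ltW k_gt0.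
apply: addr_ge0; first by rewrite !mulr_ge0.
by do 3 apply: mulr_ge0 => //; rewrite mulr_ge0.
Qed.
Let De_ge0 : 0 <= De. Proof. exact: gronwall_const_ge0 Ae_ge0 mu_gt0. Qed.

Section Scaled.
Variable s : R.
Hypotheses (s_gt0 : 0 < s) (s_small : s * e0 < r).
Variable psi : R -> E * X.
Hypotheses (psi_sol : is_sol (sysF F G) psi)
  (psi0 : psi 0 = (s *: (phi 0).1, (phi 0).2)).

Let psi_e0 : enorm (psi 0).1 = s * e0.
Proof. by rewrite psi0 /= enormZ gtr0_norm. Qed.

Lemma psi_e_decay t : 0 <= t -> enorm (psi t).1 <= k * (s * e0) * expR (- lam * t).
Proof. by rewrite -psi_e0; apply: tules; rewrite ?psi_e0. Qed.

Lemma psi_e_bound t : 0 <= t -> enorm (psi t).1 <= k * (s * e0).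
Proof.
move=> t0; apply: le_trans (psi_e_decay t0) _.
have decay_le1 : expR (- lam * t) <= 1.
  by rewrite expR_le1 mulNr oppr_le0 mulr_ge0 // ltW.
by rewrite ler_piMr // !mulr_ge0 // ltW.
Qed.

Lemma psi_e_small t : 0 <= t -> enorm (psi t).1 < k * r.
Proof. by move=> t0; apply: le_lt_trans (psi_e_bound t0) _; rewrite ltr_pM2l. Qed.

Lemma x_deviation t : 0 <= t <= T -> enorm ((psi t).2 - (phi t).2) <= s * Y.
Proof.
case: psi_sol phi_sol => [psi_right0 psi_der] [phi_right0 phi_der].
apply: (enorm_gronwall (f := fun t => (psi t).2 - (phi t).2)
  (f' := fun t => G (psi t) - G (0, (phi t).2)) Ax_ge0 bx_gt0 s_gt0).
- by apply: cvgB; apply: cvg_right0_snd.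
- by rewrite psi0 subrr.
- move=> u u0; apply: is_deriveB (is_derive_snd (psi_der u u0)) (is_derive_snd (phi_der u u0)).
- move=> u /andP[u0 _]; have := psi_e_bound (ltW u0); have := psi_e_small (ltW u0).
  case: (psi u) => eu xu /= eu_small eu_bound.
  apply: le_trans (G_deviation xu (phi u).2 eu_small) _; rewrite lerD2r.
  rewrite /Ax (_ : s * _ = nx%:R * (c * (k * (s * e0)))); last by ring.
  by rewrite ler_wpM2l // ler_wpM2l // ltW.
Qed.

Lemma e_deviation : enorm (s^-1 *: (psi T).1 - (phi T).1) <= s * De.
Proof.
case: psi_sol phi_sol => [psi_right0 psi_der] [phi_right0 phi_der].
apply: (enorm_gronwall (f := fun t => s^-1 *: (psi t).1 - (phi t).1)
  (f' := fun t => s^-1 *: F (psi t) - dFde F 0 (phi t).2 (phi t).1)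
  Ae_ge0 mu_gt0 s_gt0); last by rewrite T_ge0 lexx.
- apply: cvgB; last exact: cvg_right0_fst.
  by apply: cvgZl_tmp; apply: cvg_right0_fst.
- by rewrite psi0 /= scalerA mulVf ?gt_eqF // scale1r subrr.
- move=> u u0; apply: is_deriveB (is_derive_fst (phi_der u u0)).
  exact: is_deriveZ (is_derive_fst (psi_der u u0)).
- move=> u /andP[u0 uT]; have u_in : 0 <= u <= T by rewrite !ltW.
  have := x_deviation u_in; have := psi_e_bound (ltW u0); have := psi_e_small (ltW u0).
  case: (psi u) => eu xu /= eu_small eu_bound xu_dev.
  apply: le_trans (F_deviation xu (phi u).2 (phi u).1 s_gt0 eu_small) _.
  rewrite lerD2r /Ae mulrDr; have c0 := ltW c_gt0; have k0 := ltW k_gt0.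
  have eu_le : 0 <= enorm eu <= s * (k * e0) by rewrite enorm_ge0 mulrCA.
  have xu_le : 0 <= enorm (xu - (phi u).2) <= s * Y by rewrite enorm_ge0.
  apply: lerD.
    rewrite (_ : ne%:R * (ne%:R * (c * enorm eu * enorm eu)) =
      ne%:R * ne%:R * c * (enorm eu * enorm eu)); last by ring.
    rewrite (_ : ne%:R * (ne%:R * (c * k * k * e0 * e0)) =
      ne%:R * ne%:R * c * (k * e0 * (k * e0))); last by ring.
    by apply: scaled_product_le; rewrite ?mulr_ge0.
  rewrite (_ : ne%:R * (c * enorm (xu - (phi u).2) * enorm eu) =
    ne%:R * c * (enorm (xu - (phi u).2) * enorm eu)); last by ring.
  rewrite (_ : ne%:R * c * Y * k * e0 = ne%:R * c * (Y * (k * e0))); last by ring.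
  by apply: scaled_product_le; rewrite ?mulr_ge0.
Qed.

Lemma phi_e_le : enorm (phi T).1 <= k * expR (- lam * T) * e0 + s * De.
Proof.
have -> : (phi T).1 = s^-1 *: (psi T).1 - (s^-1 *: (psi T).1 - (phi T).1).
  by rewrite opprB addrC subrK.
apply: le_trans (enormD _ _) _; rewrite enormN; apply: lerD; last exact: e_deviation.
have s_inv0 : 0 <= s^-1 by rewrite invr_ge0 ltW.
rewrite enormZ ger0_norm //; apply: le_trans (ler_wpM2l s_inv0 (psi_e_decay T_ge0)) _.
by rewrite le_eqVlt; apply/orP; left; apply/eqP; field; rewrite gt_eqF.
Qed.

End Scaled.

Lemma tl_decay_at : enorm (phi T).1 <= k * expR (- lam * T) * enorm (phi 0).1.
Proof.
apply: (le_of_le_add_small De_ge0 e0_ge0 r_gt0) => s s_gt0 s_small.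
have [psi [psi0 psi_sol]] := fc (s *: (phi 0).1, (phi 0).2).
exact: (phi_e_le s_gt0 s_small psi_sol psi0).
Qed.

End Comparison.
End TransversalStability.

Theorem proposition1 (R : realType) (ne nx : nat)
  (F : 'rV[R]_ne * 'rV[R]_nx -> 'rV[R]_ne)
  (G : 'rV[R]_ne * 'rV[R]_nx -> 'rV[R]_nx) :
  C2 F -> C2 G ->
  (* TULES-NL *)
  forward_complete (sysF F G) ->
  forall r k lam : R, 0 < r -> 0 < k -> 0 < lam ->
  (forall (phi : R -> 'rV[R]_ne * 'rV[R]_nx), is_sol (sysF F G) phi ->
     enorm (phi 0).1 < r ->
     forall t : R, 0 <= t ->
       enorm (phi t).1 <= k * enorm (phi 0).1 * expR (- lam * t)) ->
  (* bounds on derivatives *)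
  forall rho mu c : R, 0 < rho -> 0 < mu -> 0 < c ->
  (forall (x : 'rV[R]_nx) (v : 'rV[R]_ne),
     enorm (dFde F 0 x v) <= mu * enorm v) ->
  (forall (x w : 'rV[R]_nx),
     enorm (dGdx G 0 x w) <= rho * enorm w) ->
  (forall (e : 'rV[R]_ne) (x : 'rV[R]_nx), enorm e < k * r ->
     [/\ forall u v : 'rV[R]_ne,
           enorm (d2Fdede F e x u v) <= c * enorm u * enorm v,
         forall (w : 'rV[R]_nx) (v : 'rV[R]_ne),
           enorm (d2Fdxde F e x w v) <= c * enorm w * enorm v
       & forall v : 'rV[R]_ne, enorm (dGde G e x v) <= c * enorm v]) ->
  (* UES-TL *)
  forward_complete (redG G) /\
  exists kt lamt : R, 0 < kt /\ 0 < lamt /\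
    forall (phi : R -> 'rV[R]_ne * 'rV[R]_nx), is_sol (tlF F G) phi ->
      forall t : R, 0 <= t ->
        enorm (phi t).1 <= kt * expR (- lamt * t) * enorm (phi 0).1.
Proof.
move=> CF CG fc r k lam r_gt0 k_gt0 lam_gt0 tules rho mu c rho_gt0 mu_gt0 c_gt0
  dFde0_bound dGdx0_bound second_bounds.
split; first exact: (reduced_forward_complete fc r_gt0 tules).
exists k, lam; split => //; split => // phi phi_sol t t_ge0.
exact: (tl_decay_at CF CG fc r_gt0 k_gt0 lam_gt0 tules rho_gt0 mu_gt0 c_gt0
  dFde0_bound dGdx0_bound second_bounds phi_sol t_ge0).
Qed.
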